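(* Let $A$ be a ring for which every element is a sum of units. Then $A$ is the only factroid of $A$ that contains a left-regular element. Thus, if $A$ is moreover an integral domain, then the only factroids of $A$ are $\{0\}$ and $A$.
   Context: Rings are unital, not necessarily commutative. $\mathrm{reg}(A)$ denotes the set of left-regular elements (left nonzerodivisors) of $A$. A factroid of $A$ is an additive subgroup $F$ of $A$ such that for all $a\in A$ and $b\in\mathrm{reg}(A)$, $ba\in F$ implies $a\in F$. *)

From HB Require Import structures.
From mathcomp Require Import all_boot all_order all_algebra.
Set Implicit Arguments. Unset Strict Implicit. Unset Printing Implicit Defensive.
Import GRing.Theory.
Local Open Scope ring_scope.

Definition is_unit (A : pzRingType) (u : A) : Prop :=
  exists v : A, u * v = 1 /\ v * u = 1.

Definition sum_of_units (A : pzRingType) (a : A) : Prop :=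
  exists s : seq A, (forall u, u \in s -> is_unit u) /\ a = \sum_(u <- s) u.

(* left-regular element: b * a = 0 -> a = 0, i.e. left multiplication by b injective *)
Definition left_regular (A : pzRingType) (b : A) : Prop := GRing.lreg b.

Definition additive_subgroup (A : pzRingType) (F : A -> Prop) : Prop :=
  F 0 /\ (forall x y, F x -> F y -> F (x - y)).

Definition factroid (A : pzRingType) (F : A -> Prop) : Prop :=
  additive_subgroup F /\
  (forall a b : A, left_regular b -> F (b * a) -> F a).

Definition integral_domain (A : pzRingType) : Prop :=
  (1 : A) <> 0 /\ (forall x y : A, x * y = y * x) /\
  (forall x y : A, x * y = 0 -> x = 0 \/ y = 0).

From HB Require Import structures.
From mathcomp Require Import all_boot all_order all_algebra.
From Stdlib Require Import Classical.
Import GRing.Theory.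
Local Open Scope ring_scope.

(* If b is left-regular and lies in a factroid F, then every unit u lies in F:
   with v its inverse, b * v is again left-regular and (b * v) * u = b is in F.
   Being an additive subgroup, F then contains every sum of units.  In an
   integral domain every nonzero element is left-regular, so a factroid is
   either {0} or contains a left-regular element. *)

Lemma additive_subgroupD (A : pzRingType) (F : A -> Prop) :
  additive_subgroup F -> forall x y, F x -> F y -> F (x + y).
Proof.
move=> [F0 FB] x y Fx Fy.
by have := FB x (0 - y) Fx (FB 0 y F0 Fy); rewrite sub0r opprK.
Qed.

Lemma additive_subgroup_sum (A : pzRingType) (F : A -> Prop) (s : seq A) :
  additive_subgroup F -> (forall u, u \in s -> F u) -> F (\sum_(u <- s) u).
Proof.
move=> FG Fs; rewrite big_seq.
by apply: big_ind => //; [case: FG | exact: additive_subgroupD].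
Qed.

Lemma lreg_unit (A : pzRingType) (u : A) : is_unit u -> left_regular u.
Proof. by case=> v [_ vu]; apply: (@GRing.lregMl _ v); rewrite vu; apply: lreg1. Qed.

Lemma factroid_unit (A : pzRingType) (F : A -> Prop) (b u : A) :
  factroid F -> left_regular b -> F b -> is_unit u -> F u.
Proof.
move=> [_ Freg] rb Fb [v [uv vu]].
apply: (Freg u (b * v)); last by rewrite -mulrA vu mulr1.
by apply: (lregM rb); apply: lreg_unit; exists u.
Qed.

Lemma factroid_lreg_full (A : pzRingType) (F : A -> Prop) :
  (forall a : A, sum_of_units a) -> factroid F ->
  (exists b : A, left_regular b /\ F b) -> forall x : A, F x.
Proof.
move=> hA FF [b [rb Fb]] x; have [s [s_units ->]] := hA x.
apply: additive_subgroup_sum; first by case: FF.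
by move=> u /s_units; apply: factroid_unit rb Fb.
Qed.

Lemma lreg_no_zero_divisors (A : pzRingType) (b : A) :
  (forall x y : A, x * y = 0 -> x = 0 \/ y = 0) -> b <> 0 -> left_regular b.
Proof.
move=> hdiv nb x y bxy; apply/eqP; rewrite -subr_eq0; apply/eqP.
have : b * (x - y) = 0 by rewrite mulrBr bxy subrr.
by case/hdiv.
Qed.

Theorem theorem4p12 (A : pzRingType)
  (hA : forall a : A, sum_of_units a) :
  (forall F : A -> Prop, factroid F ->
     (exists b : A, left_regular b /\ F b) -> forall x : A, F x) /\
  (integral_domain A ->
     forall F : A -> Prop, factroid F ->
       (forall x : A, F x <-> x = 0) \/ (forall x : A, F x)).
Proof.
split=> [F|[_ [_ hdiv]] F FF]; first exact: factroid_lreg_full.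
have [[x [Fx nx]]|F_zero] := classic (exists x, F x /\ x <> 0).
  right; apply: factroid_lreg_full => //.
  by exists x; split=> //; apply: lreg_no_zero_divisors.
left=> x; split=> [Fx|->]; last by case: FF => [[]].
by apply: NNPP => nx; apply: F_zero; exists x.
Qed.
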